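(* For any POVM $\{\mathcal{M}_i\}_{i\in\mathcal{O}}$ on $\mathcal{H}$, \[K^*(\{\mathcal{M}_i\}_{i\in\mathcal{O}})=\max_{A\subseteq\mathcal{O}}\big[\lambda_{\max}(\mathcal{M}_A)-\lambda_{\min}(\mathcal{M}_A)\big],\qquad \mathcal{M}_A=\sum_{i\in A}\mathcal{M}_i,\] where $\lambda_{\max},\lambda_{\min}$ are the largest and smallest eigenvalues (with $\mathcal{M}_\emptyset=0$). Moreover, if $A^*$ attains the maximum and $|\psi\rangle,|\phi\rangle$ are mutually orthogonal normalized eigenvectors of $\mathcal{M}_{A^*}$ for its largest and smallest eigenvalues respectively, then with $\psi=|\psi\rangle\langle\psi|$, $\phi=|\phi\rangle\langle\phi|$, \[2K^*(\{\mathcal{M}_i\}_{i\in\mathcal{O}})=\sum_{i\in\mathcal{O}}|\mathrm{tr}(\mathcal{M}_i(\psi-\phi))|.\]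
   Context: $\mathcal{H}$ is a finite-dimensional Hilbert space of dimension at least 2, $\mathcal{D}(\mathcal{H})$ its density matrices. A POVM is a finite family $\{\mathcal{M}_i\}_{i\in\mathcal{O}}$ of positive semidefinite matrices with $\sum_i\mathcal{M}_i=I$, and $K^*(\{\mathcal{M}_i\}_{i\in\mathcal{O}})=\max_{\rho,\sigma\in\mathcal{D}(\mathcal{H})}\frac12\sum_{i\in\mathcal{O}}|\mathrm{tr}(\mathcal{M}_i(\rho-\sigma))|$. *)

From HB Require Import structures.
From mathcomp Require Import all_boot all_order all_algebra all_field.
Set Implicit Arguments. Unset Strict Implicit. Unset Printing Implicit Defensive.
Import Order.TTheory GRing.Theory Num.Theory.
Local Open Scope ring_scope.

Definition adjmx (m p : nat) (A : 'M[algC]_(m, p)) : 'M[algC]_(p, m) :=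
  (map_mx (@Num.conj _) A)^T.

Definition hermitian (n : nat) (A : 'M[algC]_n) : Prop := adjmx A = A.

Definition psd (n : nat) (A : 'M[algC]_n) : Prop :=
  hermitian A /\ forall v : 'cV[algC]_n, 0 <= (adjmx v *m A *m v) 0 0.

Definition density (n : nat) (rho : 'M[algC]_n) : Prop :=
  psd rho /\ \tr rho = 1.

Definition povm (n : nat) (O : finType) (M : O -> 'M[algC]_n) : Prop :=
  (forall i, psd (M i)) /\ \sum_(i : O) M i = 1%:M.

Definition Msum (n : nat) (O : finType) (M : O -> 'M[algC]_n) (A : {set O})
  : 'M[algC]_n := \sum_(i in A) M i.

Definition dist_val (n : nat) (O : finType) (M : O -> 'M[algC]_n)
  (rho sigma : 'M[algC]_n) : algC :=
  2^-1 * \sum_(i : O) `| \tr (M i *m (rho - sigma)) |.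

Definition is_Kstar (n : nat) (O : finType) (M : O -> 'M[algC]_n) (k : algC)
  : Prop :=
  (exists rho sigma, density rho /\ density sigma /\ dist_val M rho sigma = k)
  /\ (forall rho sigma, density rho -> density sigma -> dist_val M rho sigma <= k).

Definition is_lambda_max (n : nat) (A : 'M[algC]_n) (l : algC) : Prop :=
  eigenvalue A l /\ forall b, eigenvalue A b -> b <= l.
Definition is_lambda_min (n : nat) (A : 'M[algC]_n) (l : algC) : Prop :=
  eigenvalue A l /\ forall b, eigenvalue A b -> l <= b.

Definition is_gap (n : nat) (O : finType) (M : O -> 'M[algC]_n) (A : {set O})
  (g : algC) : Prop :=
  exists lmax lmin, is_lambda_max (Msum M A) lmax /\
    is_lambda_min (Msum M A) lmin /\ g = lmax - lmin.

Definition is_max_gap (n : nat) (O : finType) (M : O -> 'M[algC]_n) (k : algC)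
  : Prop :=
  (exists A, is_gap M A k) /\ (forall A g, is_gap M A g -> g <= k).

From Pilot Require Import Defs.
From HB Require Import structures.
From mathcomp Require Import all_boot all_order all_algebra all_field.
Import Order.TTheory GRing.Theory Num.Theory.
Local Open Scope ring_scope.

Set Implicit Arguments. Unset Strict Implicit.

(* For density matrices rho, sigma put a_i = tr(M_i (rho - sigma)).  These
   numbers are real and sum to tr(rho - sigma) = 0, so sum_i |a_i| is twice the
   sum of the a_i over A = {i | a_i >= 0}, and that sum is
   tr(M_A rho) - tr(M_A sigma) <= lambda_max(M_A) - lambda_min(M_A), because
   tr(H rho) is a convex combination of the eigenvalues of a Hermitian H.
   Conversely, for every A and unit eigenvectors psi, phi of M_A for its
   extreme eigenvalues, the choice rho = psi psi^*, sigma = phi phi^* gives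
   sum_(i in A) a_i = lambda_max(M_A) - lambda_min(M_A), while
   2 sum_(i in A) a_i <= sum_i |a_i| holds for any real a_i summing to 0. *)

Lemma real_argmax (R : numDomainType) (I : finType) (i0 : I) (F : I -> R) :
  (forall i, F i \is Num.real) -> exists j, forall i, F i <= F j.
Proof.
move=> F_real.
suff [j le_j] : exists j, forall i, i \in enum I -> F i <= F j.
  by exists j => i; apply: le_j; rewrite mem_enum.
elim: (enum I) => [|a s [j le_j]]; first by exists i0.
have [le_aj | le_ja] := real_leP (F_real a) (F_real j).
- exists j => i; rewrite inE => /predU1P [-> //|]; exact: le_j.
- exists a => i; rewrite inE => /predU1P [-> //|/le_j le_ij].
  exact: le_trans le_ij (ltW le_ja).
Qed.

Lemma real_argmin (R : numDomainType) (I : finType) (i0 : I) (F : I -> R) :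
  (forall i, F i \is Num.real) -> exists j, forall i, F j <= F i.
Proof.
move=> F_real; have [i|j le_j] := @real_argmax R I i0 (fun i => - F i).
  by rewrite realN.
by exists j => i; rewrite -lerN2 le_j.
Qed.

Section ZeroSum.
Variables (R : numDomainType) (I : finType) (a : I -> R).
Hypotheses (a_real : forall i, a i \is Num.real) (a_sum0 : \sum_i a i = 0).

Lemma sum_setC_zero_sum (A : {set I}) :
  \sum_(i in ~: A) a i = - \sum_(i in A) a i.
Proof.
have /eqP := a_sum0; rewrite (bigID (mem A)) /= addrC addr_eq0 => /eqP <-.
by apply: eq_bigl => i; rewrite in_setC.
Qed.

Lemma sum_norm_zero_sum :
  \sum_i `|a i| = 2 * \sum_(i in [set i | 0 <= a i]) a i.
Proof.
set A := [set i | 0 <= a i].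
rewrite [LHS](bigID (mem A)) /= mulr_natl mulr2n; congr (_ + _).
  by apply: eq_bigr => i; rewrite inE => /ger0_norm.
rewrite -[RHS]opprK -sum_setC_zero_sum -sumrN; apply: eq_big => [i|i].
  by rewrite in_setC.
by rewrite inE real_leNgt ?real0 // negbK => /ltr0_norm.
Qed.

Lemma sum_norm_ge_zero_sum (A : {set I}) :
  2 * \sum_(i in A) a i <= \sum_i `|a i|.
Proof.
rewrite [X in _ <= X](bigID (mem A)) /= mulr_natl mulr2n.
have -> : \sum_(i | i \notin A) `|a i| = \sum_(i in ~: A) `|a i|.
  by apply: eq_bigl => i; rewrite in_setC.
apply: lerD; first by apply: ler_sum => i _; exact: real_ler_norm.
rewrite -[X in X <= _]opprK -sum_setC_zero_sum -sumrN.
by apply: ler_sum => i _; rewrite -normrN real_ler_norm ?rpredN.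
Qed.

End ZeroSum.

Lemma adjmxK m p (A : 'M[algC]_(m, p)) : adjmx (adjmx A) = A.
Proof. by apply/matrixP => i j; rewrite !mxE conjCK. Qed.

Lemma adjmxM m p q (A : 'M[algC]_(m, p)) (B : 'M[algC]_(p, q)) :
  adjmx (A *m B) = adjmx B *m adjmx A.
Proof. by rewrite /adjmx map_mxM trmx_mul. Qed.

Lemma adjmxZ m p c (A : 'M[algC]_(m, p)) : adjmx (c *: A) = c^* *: adjmx A.
Proof. by apply/matrixP => i j; rewrite !mxE rmorphM. Qed.

Lemma adjmx_sum m p (I : finType) (P : pred I) (F : I -> 'M[algC]_(m, p)) :
  adjmx (\sum_(i | P i) F i) = \sum_(i | P i) adjmx (F i).
Proof. by rewrite /adjmx raddf_sum linear_sum. Qed.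

Section Sesquilinear.
Import Num.Def.
Local Open Scope sesquilinear_scope.

Lemma adjmx_trmxC m p (A : 'M[algC]_(m, p)) : adjmx A = A ^t*.
Proof. by rewrite /adjmx map_trmx. Qed.

Lemma hermitian_hermsymmx n (H : 'M[algC]_n) :
  Defs.hermitian H -> H \is hermsymmx.
Proof.
by move=> H_herm; apply/is_hermitianmxP; rewrite expr0 scale1r -map_trmx [RHS]H_herm.
Qed.

End Sesquilinear.

Section Spectral.
Variables (n : nat) (H : 'M[algC]_n).
Hypothesis H_herm : Defs.hermitian H.
Local Notation U := (spectralmx H).
Local Notation d := (spectral_diag H).

Lemma spectralmx_mul_adj : U *m adjmx U = 1%:M.
Proof. by rewrite adjmx_trmxC; apply/unitarymxP/spectral_unitarymx. Qed.

Lemma adj_mul_spectralmx : adjmx U *m U = 1%:M.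
Proof.
by rewrite adjmx_trmxC -invmx_unitary ?spectral_unitarymx ?mulVmx ?spectral_unit.
Qed.

Lemma hermitian_spectral_decomp : H = adjmx U *m diag_mx d *m U.
Proof.
have /hermitian_normalmx/orthomx_spectralP {1}-> := hermitian_hermsymmx H_herm.
by rewrite invmx_unitary ?spectral_unitarymx // adjmx_trmxC.
Qed.

Lemma spectral_diag_real j : d 0 j \is Num.real.
Proof.
by have /mxOverP := hermitian_spectral_diag_real (hermitian_hermsymmx H_herm); apply.
Qed.

Lemma row_spectralmx_eigen j : row j U *m H = d 0 j *: row j U.
Proof.
rewrite [X in _ *m X]hermitian_spectral_decomp -row_mul !mulmxA.
rewrite spectralmx_mul_adj mul1mx row_mul; apply/rowP => k.
rewrite !mxE (bigD1 j) //= big1 => [|l /negbTE ne_lj]; rewrite !mxE.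
  by rewrite eqxx mulr1n addr0.
by rewrite eq_sym ne_lj mulr0n mul0r.
Qed.

Lemma row_spectralmx_neq0 j : row j U != 0.
Proof.
apply: contraPneq spectralmx_mul_adj => U_j0 /matrixP/(_ j j).
rewrite !mxE eqxx big1 => [/esym/eqP|k _]; first by rewrite oner_eq0.
by have := congr1 (fun v : 'rV_n => v 0 k) U_j0; rewrite !mxE => ->; rewrite mul0r.
Qed.

Lemma eigenvalue_spectral_diag j : eigenvalue H (d 0 j).
Proof.
apply/eigenvalueP; exists (row j U).
  exact: row_spectralmx_eigen.
exact: row_spectralmx_neq0.
Qed.

Lemma eigenvalue_hermitianP b : eigenvalue H b -> exists j, b = d 0 j.
Proof.
move=> /eigenvalueP [v vH_eq v_neq0].
pose w := v *m adjmx U.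
have wd_eq : w *m diag_mx d = b *: w.
  have := congr1 (mulmx^~ (adjmx U)) vH_eq.
  rewrite /= {1}hermitian_spectral_decomp -!mulmxA spectralmx_mul_adj mulmx1.
  by rewrite -scalemxAl !mulmxA.
have [k w_k] : exists k, w 0 k != 0.
  apply/existsP; apply: contraNT v_neq0 => /existsPn w0; apply/eqP.
  rewrite -[v]mulmx1 -adj_mul_spectralmx mulmxA -/w.
  suff -> : w = 0 by rewrite mul0mx.
  by apply/rowP => k; have := w0 k; rewrite negbK => /eqP ->; rewrite mxE.
exists k; apply: (mulIf w_k).
by have := congr1 (fun r : 'rV_n => r 0 k) wd_eq; rewrite /= mul_mx_diag !mxE mulrC.
Qed.

Lemma mxtrace_mul_spectral rho :
  \tr (H *m rho) = \sum_j d 0 j * (U *m rho *m adjmx U) j j.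
Proof.
rewrite {1}hermitian_spectral_decomp -!mulmxA mxtrace_mulC -mulmxA.
by apply: eq_bigr => j _; rewrite mul_diag_mx mxE mulmxA.
Qed.

Lemma sum_spectral_weight rho : \sum_j (U *m rho *m adjmx U) j j = \tr rho.
Proof. by rewrite -/(mxtrace _) mxtrace_mulC mulmxA adj_mul_spectralmx mul1mx. Qed.

Lemma spectral_weight_ge0 rho j : psd rho -> 0 <= (U *m rho *m adjmx U) j j.
Proof.
move=> [_ rho_ge0]; have := rho_ge0 (adjmx (row j U)); rewrite adjmxK.
congr (_ <= _); rewrite !mxE; apply: eq_bigr => k _; rewrite !mxE.
by congr (_ * _); apply: eq_bigr => l _; rewrite !mxE.
Qed.

Lemma mxtrace_mul_psd_real rho : psd rho -> \tr (H *m rho) \is Num.real.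
Proof.
move=> rho_psd; rewrite mxtrace_mul_spectral; apply: rpred_sum => j _.
by rewrite rpredM ?spectral_diag_real ?ger0_real ?spectral_weight_ge0.
Qed.

Lemma mxtrace_mul_density_le l rho :
  (forall b, eigenvalue H b -> b <= l) -> density rho -> \tr (H *m rho) <= l.
Proof.
move=> le_l [rho_psd tr_rho1].
rewrite mxtrace_mul_spectral -[l]mulr1 -tr_rho1 -sum_spectral_weight mulr_sumr.
apply: ler_sum => j _; rewrite ler_wpM2r ?spectral_weight_ge0 //.
exact/le_l/eigenvalue_spectral_diag.
Qed.

Lemma mxtrace_mul_density_ge l rho :
  (forall b, eigenvalue H b -> l <= b) -> density rho -> l <= \tr (H *m rho).
Proof.
move=> ge_l [rho_psd tr_rho1].
rewrite mxtrace_mul_spectral -[l]mulr1 -tr_rho1 -sum_spectral_weight mulr_sumr.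
apply: ler_sum => j _; rewrite ler_wpM2r ?spectral_weight_ge0 //.
exact/ge_l/eigenvalue_spectral_diag.
Qed.

Lemma hermitian_unit_eigenvector l : eigenvalue H l ->
  exists2 psi : 'cV_n, (adjmx psi *m psi) 0 0 = 1 & H *m psi = l *: psi.
Proof.
move=> /eigenvalue_hermitianP [j ->]; exists (adjmx (row j U)).
  move/matrixP/(_ j j): spectralmx_mul_adj.
  rewrite adjmxK !mxE eqxx mulr1n => <-.
  by apply: eq_bigr => k _; rewrite !mxE.
have /CrealP d_conj := spectral_diag_real j.
by rewrite -{1}H_herm -adjmxM row_spectralmx_eigen adjmxZ d_conj.
Qed.

Lemma is_lambda_max_spectral j :
  (forall i, d 0 i <= d 0 j) -> is_lambda_max H (d 0 j).
Proof.
split=> [|b /eigenvalue_hermitianP [i ->] //]; exact: eigenvalue_spectral_diag.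
Qed.

Lemma is_lambda_min_spectral j :
  (forall i, d 0 j <= d 0 i) -> is_lambda_min H (d 0 j).
Proof.
split=> [|b /eigenvalue_hermitianP [i ->] //]; exact: eigenvalue_spectral_diag.
Qed.

End Spectral.

Section RankOneProjector.
Variables (n : nat) (psi : 'cV[algC]_n).
Hypothesis psi_unit : (adjmx psi *m psi) 0 0 = 1.

Lemma proj_density : density (psi *m adjmx psi).
Proof.
split; last by rewrite mxtrace_mulC trace_mx11.
split=> [|v]; first by rewrite /Defs.hermitian adjmxM adjmxK.
have -> : adjmx v *m (psi *m adjmx psi) *m v
          = adjmx v *m psi *m adjmx (adjmx v *m psi).
  by rewrite adjmxM adjmxK !mulmxA.
by rewrite mxE big_ord1 !mxE mul_conjC_ge0.
Qed.

Lemma mxtrace_mul_eigenproj (H : 'M[algC]_n) l :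
  H *m psi = l *: psi -> \tr (H *m (psi *m adjmx psi)) = l.
Proof.
move=> psi_eigen; rewrite mulmxA mxtrace_mulC mulmxA trace_mx11.
by rewrite -mulmxA psi_eigen -scalemxAr mxE psi_unit mulr1.
Qed.

End RankOneProjector.

Section Povm.
Variables (n : nat) (O : finType) (M : O -> 'M[algC]_n).
Hypothesis M_povm : povm M.

Lemma hermitian_Msum A : Defs.hermitian (Msum M A).
Proof.
rewrite /Defs.hermitian /Msum adjmx_sum; apply: eq_bigr => i _.
exact: (M_povm.1 i).1.
Qed.

Lemma mxtrace_Msum A X : \tr (Msum M A *m X) = \sum_(i in A) \tr (M i *m X).
Proof. by rewrite /Msum mulmx_suml raddf_sum. Qed.

Lemma povm_sum_mxtrace X : \sum_i \tr (M i *m X) = \tr X.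
Proof. by rewrite -raddf_sum -mulmx_suml M_povm.2 mul1mx. Qed.

Lemma povm_mxtrace_diff_real rho sigma i : psd rho -> psd sigma ->
  \tr (M i *m (rho - sigma)) \is Num.real.
Proof.
have M_herm := (M_povm.1 i).1.
by move=> rho_psd sigma_psd; rewrite mulmxBr raddfB rpredB ?mxtrace_mul_psd_real.
Qed.

Lemma povm_sum_mxtrace_diff rho sigma : density rho -> density sigma ->
  \sum_i \tr (M i *m (rho - sigma)) = 0.
Proof.
move=> [_ tr_rho] [_ tr_sigma].
by rewrite povm_sum_mxtrace linearB /= tr_rho tr_sigma subrr.
Qed.

Lemma povm_gap_exists A : (0 < n)%N -> exists g, is_gap M A g.
Proof.
move=> n_gt0; have H_herm := hermitian_Msum A.
pose d := spectral_diag (Msum M A); have d_real := spectral_diag_real H_herm.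
have [jmax le_jmax] := real_argmax (Ordinal n_gt0) d_real.
have [jmin ge_jmin] := real_argmin (Ordinal n_gt0) d_real.
exists (d 0 jmax - d 0 jmin), (d 0 jmax), (d 0 jmin).
by split; [apply: is_lambda_max_spectral | split; [apply: is_lambda_min_spectral|]].
Qed.

Lemma povm_max_gap : (0 < n)%N -> exists k, is_max_gap M k.
Proof.
(* Maximising over triples (A, j, j') avoids choosing a gap for each A. *)
move=> n_gt0; pose d A := spectral_diag (Msum M A).
pose F (t : {set O} * 'I_n * 'I_n) := d t.1.1 0 t.1.2 - d t.1.1 0 t.2.
have F_real t : F t \is Num.real.
  by apply: rpredB; apply: spectral_diag_real; apply: hermitian_Msum.
have [[[As jmax] jmin] le_F] :=
  real_argmax (set0, Ordinal n_gt0, Ordinal n_gt0) F_real.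
exists (F (As, jmax, jmin)); split.
  exists As, (d As 0 jmax), (d As 0 jmin); split; last split => //.
    apply: (is_lambda_max_spectral (hermitian_Msum As)) => i.
    by have := le_F (As, i, jmin); rewrite lerD2r.
  apply: (is_lambda_min_spectral (hermitian_Msum As)) => i.
  by have := le_F (As, jmax, i); rewrite lerD2l lerN2.
move=> A _ [lmax [lmin [[lmax_eig _] [[lmin_eig _] ->]]]].
have [imax ->] := eigenvalue_hermitianP (hermitian_Msum A) lmax_eig.
have [imin ->] := eigenvalue_hermitianP (hermitian_Msum A) lmin_eig.
exact: le_F (A, imax, imin).
Qed.

Lemma povm_sum_norm_le k rho sigma : (0 < n)%N ->
  (forall A g, is_gap M A g -> g <= k) -> density rho -> density sigma ->
  \sum_i `|\tr (M i *m (rho - sigma))| <= 2 * k.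
Proof.
move=> n_gt0 le_k rho_dens sigma_dens.
have a_real i := povm_mxtrace_diff_real i rho_dens.1 sigma_dens.1.
rewrite (sum_norm_zero_sum a_real) ?povm_sum_mxtrace_diff // ler_wpM2l //.
rewrite -mxtrace_Msum; set A := [set _ | _].
have [g gap_g] := povm_gap_exists A n_gt0; apply: le_trans (le_k _ _ gap_g).
have [lmax [lmin [[_ le_lmax] [[_ ge_lmin] ->]]]] := gap_g.
have A_herm := hermitian_Msum A.
rewrite mulmxBr linearB /= lerB //.
  exact: mxtrace_mul_density_le.
exact: mxtrace_mul_density_ge.
Qed.

Lemma povm_sum_norm_ge A lmax lmin (psi phi : 'cV_n) :
  (adjmx psi *m psi) 0 0 = 1 -> (adjmx phi *m phi) 0 0 = 1 ->
  Msum M A *m psi = lmax *: psi -> Msum M A *m phi = lmin *: phi ->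
  2 * (lmax - lmin) <=
  \sum_i `|\tr (M i *m (psi *m adjmx psi - phi *m adjmx phi))|.
Proof.
move=> psi_unit phi_unit psi_eigen phi_eigen.
have psi_dens := proj_density psi_unit; have phi_dens := proj_density phi_unit.
have <- : \sum_(i in A) \tr (M i *m (psi *m adjmx psi - phi *m adjmx phi))
          = lmax - lmin.
  rewrite -mxtrace_Msum mulmxBr linearB /=.
  by rewrite (mxtrace_mul_eigenproj psi_unit psi_eigen)
             (mxtrace_mul_eigenproj phi_unit phi_eigen).
apply: sum_norm_ge_zero_sum; last exact: povm_sum_mxtrace_diff.
by move=> i; apply: povm_mxtrace_diff_real; [case: psi_dens | case: phi_dens].
Qed.

End Povm.

Theorem mainTheorem8 (n : nat) (O : finType) (M : O -> 'M[algC]_n) :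
  (2 <= n)%N -> povm M ->
  exists k : algC,
    is_Kstar M k /\ is_max_gap M k /\
    (forall (Astar : {set O}) (lmax lmin : algC),
       is_lambda_max (Msum M Astar) lmax ->
       is_lambda_min (Msum M Astar) lmin ->
       (forall A g, is_gap M A g -> g <= lmax - lmin) ->
       forall psi phi : 'cV[algC]_n,
         (adjmx psi *m psi) 0 0 = 1 -> (adjmx phi *m phi) 0 0 = 1 ->
         (adjmx psi *m phi) 0 0 = 0 ->
         Msum M Astar *m psi = lmax *: psi ->
         Msum M Astar *m phi = lmin *: phi ->
         2 * k = \sum_(i : O)
                   `| \tr (M i *m (psi *m adjmx psi - phi *m adjmx phi)) |).
Proof.
move=> n_ge2 M_povm; have n_gt0 : (0 < n)%N := ltnW n_ge2.
have [k [[As gap_As] le_k]] := povm_max_gap M_povm n_gt0.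
have sum_eq_2k A lmax lmin (psi phi : 'cV_n) : lmax - lmin = k ->
    (adjmx psi *m psi) 0 0 = 1 -> (adjmx phi *m phi) 0 0 = 1 ->
    Msum M A *m psi = lmax *: psi -> Msum M A *m phi = lmin *: phi ->
    2 * k = \sum_i `|\tr (M i *m (psi *m adjmx psi - phi *m adjmx phi))|.
  move=> gap_k psi_unit phi_unit psi_eigen phi_eigen; apply/le_anti/andP; split.
    by rewrite -gap_k; exact: povm_sum_norm_ge psi_eigen phi_eigen.
  exact: povm_sum_norm_le (proj_density psi_unit) (proj_density phi_unit).
exists k; split; last split.
- split.
    have [lmax [lmin [[lmax_eig _] [[lmin_eig _] def_k]]]] := gap_As.
    have As_herm := hermitian_Msum M_povm As.
    have [psi psi_unit psi_eigen] := hermitian_unit_eigenvector As_herm lmax_eig.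
    have [phi phi_unit phi_eigen] := hermitian_unit_eigenvector As_herm lmin_eig.
    exists (psi *m adjmx psi), (phi *m adjmx phi).
    split; [exact: proj_density | split; first exact: proj_density].
    rewrite /dist_val -(sum_eq_2k As lmax lmin psi phi (esym def_k)) //.
    by rewrite mulKf ?pnatr_eq0.
  move=> rho sigma rho_dens sigma_dens.
  by rewrite /dist_val ler_pdivrMl ?ltr0n ?povm_sum_norm_le.
- by split; first exists As.
move=> Astar lmax lmin lmax_max lmin_min le_gap psi phi psi_unit phi_unit _.
apply: sum_eq_2k => //; apply/le_anti/andP; split; last exact: le_gap gap_As.
by apply: (le_k Astar); exists lmax, lmin.
Qed.
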